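(* Let $\mathcal{X}=\{\{1,4,5\},\{2,4,5\},\{1,6,7\},\{2,6,7\},\{1,2,3\}\}$ on the ground set $[7]$. Then the uniform matroid $U_{2,7}$ is the unique minimal $\mathcal{X}$-matroid with respect to the dependency order, while $\mathrm{val}_{\mathcal{X}}([7])=3$; in particular $\mathrm{val}_{\mathcal{X}}$ is not the rank function of the unique minimal $\mathcal{X}$-matroid.
   Context: An $\mathcal{X}$-matroid is a matroid on $[7]$ in which every member of $\mathcal{X}$ is a circuit. Dependency order: $N_1\le N_2$ iff every dependent set of $N_1$ is dependent in $N_2$. $U_{2,7}$ is the uniform matroid of rank $2$ on $[7]$ (dependent sets are the subsets of size $\ge3$). A proper $\mathcal{X}$-sequence is a sequence $\mathcal{S}=(X_1,\dots,X_k)$ ($k\ge0$) of members of $\mathcal{X}$ with $X_i\not\subseteq\bigcup_{j<i}X_j$ for $i=2,\dots,k$; for $F\subseteq[7]$, $\mathrm{val}(F,\mathcal{S})=|F\cup\bigcup_{i=1}^kX_i|-k$, and $\mathrm{val}_{\mathcal{X}}(F)$ is the minimum of $\mathrm{val}(F,\mathcal{S})$ over all proper $\mathcal{X}$-sequences $\mathcal{S}$. *)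

(* Ground set [7] = {1,...,7} is modelled by 'I_7,
   where the element k of [7] is the ordinal (k-1) (see [lab]). *)
From mathcomp Require Import all_boot.
Set Implicit Arguments. Unset Strict Implicit. Unset Printing Implicit Defensive.

Definition E := 'I_7.

Definition lab (k : nat) : E := inord k.-1.

Definition is_matroid (I : {set {set E}}) : Prop :=
  [/\ set0 \in I,
      (forall A B : {set E}, B \in I -> A \subset B -> A \in I) &
      (forall A B : {set E}, A \in I -> B \in I -> #|A| < #|B| ->
         exists2 x, x \in B :\: A & x |: A \in I)].

Definition dependent (I : {set {set E}}) (A : {set E}) : Prop := A \notin I.

Definition circuit (I : {set {set E}}) (C : {set E}) : Prop :=
  dependent I C /\ (forall D : {set E}, D \proper C -> ~ dependent I D).

Definition X_matroid (X : {set {set E}}) (I : {set {set E}}) : Prop :=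
  is_matroid I /\ (forall C, C \in X -> circuit I C).

Definition dep_le (I1 I2 : {set {set E}}) : Prop :=
  forall A : {set E}, dependent I1 A -> dependent I2 A.

Definition minimal_X_matroid (X : {set {set E}}) (I : {set {set E}}) : Prop :=
  X_matroid X I /\
  (forall I' : {set {set E}}, X_matroid X I' -> dep_le I' I -> I' = I).

Definition U27 : {set {set E}} := [set A : {set E} | #|A| <= 2].

Definition rank (I : {set {set E}}) (F : {set E}) : nat :=
  \max_(A in I | A \subset F) #|A|.

Definition proper_seq (X : {set {set E}}) (S : seq {set E}) : Prop :=
  (forall Y, Y \in S -> Y \in X) /\
  (forall i, 1 <= i < size S ->
     ~~ (nth set0 S i \subset \bigcup_(Y <- take i S) Y)).

Definition val (F : {set E}) (S : seq {set E}) : nat :=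
  #|F :|: \bigcup_(Y <- S) Y| - size S.

Definition valX_is (X : {set {set E}}) (F : {set E}) (v : nat) : Prop :=
  (exists S, proper_seq X S /\ val F S = v) /\
  (forall S, proper_seq X S -> v <= val F S).

Definition Xex : {set {set E}} :=
  [set [set lab 1; lab 4; lab 5]; [set lab 2; lab 4; lab 5];
       [set lab 1; lab 6; lab 7]; [set lab 2; lab 6; lab 7];
       [set lab 1; lab 2; lab 3]].

From Pilot Require Import Defs.
From mathcomp Require Import all_boot.
Set Implicit Arguments. Unset Strict Implicit. Unset Printing Implicit Defensive.

(* Every member of X is a 3-set, hence a circuit of U_{2,7}.  Conversely an
   X-matroid has no independent 3-set: {1,2} is independent, and augmenting it
   from a larger independent set yields an independent {1,2,x} with x in {4,5}
   or {6,7} (x = 3 would close the circuit {1,2,3}); but {1,2,x} cannot then be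
   used to augment the independent pair {4,5} (resp. {6,7}), since both
   one-point extensions {1,4,5}, {2,4,5} (resp. {1,6,7}, {2,6,7}) are circuits.
   So U_{2,7} lies below every X-matroid in the dependency order.
   For val, each member of X is a union of at least two of the five blocks
   {1}, {2}, {3}, {4,5}, {6,7}; in a proper sequence every member reaches a new
   block, so the sequence has at most 4 members and val([7], S) = 7 - |S| >= 3,
   while the rank of U_{2,7} never exceeds 2. *)

Lemma uniform_is_matroid k : is_matroid [set A : {set E} | #|A| <= k].
Proof.
split=> [|A B|A B]; rewrite !inE.
- by rewrite cards0.
- by move=> B_le /subset_leq_card A_B; apply: leq_trans B_le.
- move=> _ B_le A_lt_B.
  have : ~~ (B \subset A) by apply: contraTN A_lt_B => /subset_leq_card; rewrite leqNgt.
  case/subsetPn=> x x_B x_A; exists x; first by rewrite inE x_A.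
  by rewrite inE cardsU1 x_A (leq_trans A_lt_B B_le).
Qed.

Lemma uniform_circuit k (C : {set E}) :
  #|C| = k.+1 -> circuit [set A : {set E} | #|A| <= k] C.
Proof.
move=> C_card; split; first by rewrite /dependent inE C_card ltnn.
by move=> D /proper_card; rewrite C_card ltnS /dependent inE => ->.
Qed.

Lemma uniform_dep_le k (I : {set {set E}}) :
  (forall A, A \in I -> #|A| <= k) -> dep_le [set A : {set E} | #|A| <= k] I.
Proof. by move=> small A; rewrite /dependent inE; apply: contra => /small. Qed.

Lemma rank_uniform_le k (F : {set E}) : rank [set A : {set E} | #|A| <= k] F <= k.
Proof. by rewrite /rank; apply/bigmax_leqP => A /andP[]; rewrite inE. Qed.

Lemma dep_le_anti (I1 I2 : {set {set E}}) : dep_le I1 I2 -> dep_le I2 I1 -> I1 = I2.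
Proof.
move=> le12 le21; apply/setP => A; apply/idP/idP; apply: contraLR.
- exact: le21.
- exact: le12.
Qed.

Lemma least_X_matroid_unique_minimal (X U : {set {set E}}) :
  X_matroid X U -> (forall I, X_matroid X I -> dep_le U I) ->
  minimal_X_matroid X U /\ (forall I, minimal_X_matroid X I -> I = U).
Proof.
move=> X_U least; split.
  by split=> // I X_I le_IU; apply: dep_le_anti le_IU (least I X_I).
by move=> I [X_I minimal]; apply/esym/minimal => //; apply: least.
Qed.

Lemma X_matroid_dependent (X I : {set {set E}}) C : X_matroid X I -> C \in X -> C \notin I.
Proof. by move=> [_ circ] /circ[]. Qed.

Lemma X_matroid_indep_del (X I : {set {set E}}) a P :
  X_matroid X I -> a |: P \in X -> a \notin P -> P \in I.
Proof.
move=> [_ circ] /circ[_ minimal] a_P; apply/negPn/negP/minimal.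
by rewrite properUr // sub1set.
Qed.

Lemma indep_card_le_of_no_extension (I : {set {set E}}) B S :
  is_matroid I -> B \in I -> S \in I ->
  (forall y, y \in S :\: B -> y |: B \notin I) -> #|S| <= #|B|.
Proof.
move=> [_ _ augment] B_I S_I no_ext; rewrite leqNgt; apply/negP.
by case/(augment _ _ B_I S_I) => y /no_ext/negP.
Qed.

(* [proper_seq X S] is [{subset S <= X} /\ proper_cover_seq S], with [T := E]. *)
Definition proper_cover_seq (T : finType) (S : seq {set T}) : Prop :=
  forall i, 1 <= i < size S -> ~~ (nth set0 S i \subset \bigcup_(Y <- take i S) Y).

Lemma proper_cover_seq_rcons (T : finType) (s : seq {set T}) (Y : {set T}) :
  proper_cover_seq (rcons s Y) ->
  proper_cover_seq s /\ (s != [::] -> ~~ (Y \subset \bigcup_(Z <- s) Z)).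
Proof.
move=> grow; split=> [i /andP[i_gt0 lt_i_s] | s_n0].
  have := grow i; rewrite size_rcons nth_rcons lt_i_s -cats1 (takel_cat _ (ltnW lt_i_s)).
  by apply; rewrite i_gt0 ltnS ltnW.
have := grow (size s); rewrite size_rcons nth_rcons ltnn eqxx -cats1 take_size_cat //.
by apply; rewrite ltnSn lt0n size_eq0 s_n0.
Qed.

Lemma size_lt_card_bigcup (T : finType) (S : seq {set T}) :
  (forall Y, Y \in S -> 1 < #|Y|) -> proper_cover_seq S -> S != [::] ->
  size S < #|\bigcup_(Y <- S) Y|.
Proof.
elim/last_ind: S => // s Y IHs big_S /proper_cover_seq_rcons[grow_s Y_new] _.
rewrite size_rcons big_rcons /=.
have [-> | s_n0] := eqVneq s [::].
  by rewrite big_nil set0U big_S // mem_rcons mem_head.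
have big_s Z : Z \in s -> 1 < #|Z|.
  by move=> Z_s; apply: big_S; rewrite mem_rcons inE Z_s orbT.
apply: leq_ltn_trans (IHs big_s grow_s s_n0) _.
by rewrite setUC; apply/proper_card/properUr/Y_new.
Qed.

Lemma proper_cover_seq_imset (T T' : finType) (f : T -> T') (S : seq {set T}) :
  (forall Y, Y \in S -> f @^-1: (f @: Y) \subset Y) ->
  proper_cover_seq S -> proper_cover_seq [seq f @: Y | Y : {set T} <- S].
Proof.
move=> sat grow i i_bound; rewrite size_map in i_bound.
rewrite (nth_map set0) ?(andP i_bound).2 // -map_take big_map.
apply: contra (grow i i_bound) => /subsetP f_sub; apply/subsetP => x x_Y.
have /f_sub : f x \in f @: nth set0 S i by apply: imset_f.
rewrite bigcup_seq => /bigcupP[Z Z_prev fx_Z].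
rewrite bigcup_seq; apply/bigcupP; exists Z => //.
by apply: (subsetP (sat Z (mem_take Z_prev))); rewrite inE.
Qed.

Lemma proper_cover_seq_size_lt (T T' : finType) (f : T -> T') (S : seq {set T}) :
  (forall Y, Y \in S -> f @^-1: (f @: Y) \subset Y /\ 1 < #|f @: Y|) ->
  proper_cover_seq S -> S != [::] -> size S < #|T'|.
Proof.
move=> blocks grow S_n0.
rewrite -(size_map (fun Y : {set T} => f @: Y)).
apply: leq_trans (max_card _); apply: size_lt_card_bigcup.
- by move=> _ /mapP[Y Y_S ->]; case: (blocks Y Y_S).
- by apply: proper_cover_seq_imset => // Y /blocks[].
- by case: S S_n0 {grow blocks}.
Qed.

Lemma block_bound (x : E) : nth 0 [:: 0; 1; 2; 3; 3; 4; 4] x < 5.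
Proof. by case: x => [[|[|[|[|[|[|[|]]]]]]]]. Qed.

(* [x : E] is the 0-based ordinal of the label [x.+1]. *)
Definition block (x : E) : 'I_5 := Ordinal (block_bound x).

(* [lab] goes through [inord], which does not compute; literal ordinals do. *)
Lemma labE :
  (lab 1 = Ordinal (isT : 0 < 7)) * (lab 2 = Ordinal (isT : 1 < 7)) *
  (lab 3 = Ordinal (isT : 2 < 7)) * (lab 4 = Ordinal (isT : 3 < 7)) *
  (lab 5 = Ordinal (isT : 4 < 7)) * (lab 6 = Ordinal (isT : 5 < 7)) *
  (lab 7 = Ordinal (isT : 6 < 7)).
Proof. by do ! split; apply/val_inj; rewrite /lab /= inordK. Qed.

Lemma E_cases (P : E -> Prop) :
  P (lab 1) -> P (lab 2) -> P (lab 3) -> P (lab 4) -> P (lab 5) -> P (lab 6) -> P (lab 7) ->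
  forall x, P x.
Proof.
move=> P1 P2 P3 P4 P5 P6 P7 x.
have -> : x = lab x.+1 by apply/val_inj; rewrite /lab /= inordK.
by case: x => [[|[|[|[|[|[|[|m]]]]]]] lt_x7].
Qed.

Lemma Xex_blocks C : C \in Xex -> block @^-1: (block @: C) \subset C /\ 1 < #|block @: C|.
Proof.
rewrite /Xex !inE => /orP[/orP[/orP[/orP[|]|]|]|] /eqP ->; split.
all: try (rewrite !imsetU !imset_set1 -setUA cardsU1 cards2 !inE !labE; by []).
all: apply/subsetP; apply: E_cases; rewrite !inE => /imsetP[y];
  rewrite !inE => /orP[/orP[|]|] /eqP -> /eqP; apply/implyP; rewrite !labE; by [].
Qed.

Lemma Xex_card C : C \in Xex -> #|C| = 3.
Proof.
rewrite /Xex !inE => /orP[/orP[/orP[/orP[|]|]|]|] /eqP ->.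
all: by rewrite -setUA cardsU1 cards2 !inE !labE.
Qed.

Lemma U27_X_matroid : X_matroid Xex U27.
Proof.
split; first exact: uniform_is_matroid.
by move=> C /Xex_card; apply: uniform_circuit.
Qed.

Lemma Xex_pair_avoid (I : {set {set E}}) x p q :
  X_matroid Xex I -> x |: [set lab 1; lab 2] \in I -> x \notin [set lab 1; lab 2] ->
  lab 1 |: [set p; q] \in Xex -> lab 2 |: [set p; q] \in Xex -> lab 1 \notin [set p; q] ->
  x \notin [set p; q].
Proof.
move=> X_I x12_I x_12 X1 X2 pq_1; apply/negP => x_pq.
have : #|x |: [set lab 1; lab 2]| <= #|[set p; q]|.
  apply: (indep_card_le_of_no_extension X_I.1) => //.
    exact: X_matroid_indep_del X_I X1 pq_1.
  move=> y /setDP[+ y_pq]; rewrite !inE => /or3P[] /eqP y_eq.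
  - by rewrite y_eq x_pq in y_pq.
  - by rewrite y_eq; apply: X_matroid_dependent X1.
  - by rewrite y_eq; apply: X_matroid_dependent X2.
by rewrite cardsU1 x_12 !cards2 !labE ltnS => /leq_trans/(_ (leq_b1 _)).
Qed.

Lemma Xex_indep_card (I : {set {set E}}) A : X_matroid Xex I -> A \in I -> #|A| <= 2.
Proof.
move=> X_I A_I; have [[_ _ augment] _] := X_I.
have l12_I : [set lab 1; lab 2] \in I.
  apply: (X_matroid_indep_del (a := lab 3) X_I); last by rewrite !inE !labE.
  by rewrite [_ |: _]setUC /Xex !inE eqxx ?orbT.
rewrite leqNgt; apply/negP => A_big.
have l12_small : #|[set lab 1; lab 2]| <= 2 by rewrite cards2 ltnS leq_b1.
have [x /setDP[_ x_12] x12_I] := augment _ _ l12_I A_I (leq_ltn_trans l12_small A_big).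
have x_ne3 : x != lab 3.
  apply: contraTneq x12_I => ->; apply: X_matroid_dependent X_I _.
  by rewrite [_ |: _]setUC /Xex !inE eqxx ?orbT.
have x_n45 : x \notin [set lab 4; lab 5].
  by apply: Xex_pair_avoid X_I x12_I x_12 _ _ _; rewrite ?setUA /Xex !inE ?labE ?eqxx ?orbT.
have x_n67 : x \notin [set lab 6; lab 7].
  by apply: Xex_pair_avoid X_I x12_I x_12 _ _ _; rewrite ?setUA /Xex !inE ?labE ?eqxx ?orbT.
move: x_12 x_ne3 x_n45 x_n67; rewrite !inE; move: x {x12_I}.
by apply: E_cases; rewrite !labE.
Qed.

Lemma proper_seq_Xex_size S : proper_seq Xex S -> size S <= 4.
Proof.
move=> [S_X grow]; have [-> // | S_n0] := eqVneq S [::].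
rewrite -ltnS -[X in _ < X](card_ord 5).
by apply: (proper_cover_seq_size_lt (f := block)) => // Y /S_X /Xex_blocks.
Qed.

Lemma val_setT S : Defs.val [set: E] S = 7 - size S.
Proof. by rewrite /Defs.val setTU cardsT card_ord. Qed.

Lemma valX_setT : valX_is Xex [set: E] 3.
Proof.
split=> [|S /proper_seq_Xex_size S_small]; last by rewrite val_setT (leq_sub2l 7 S_small).
exists [:: [set lab 1; lab 4; lab 5]; [set lab 2; lab 4; lab 5];
          [set lab 1; lab 6; lab 7]; [set lab 1; lab 2; lab 3]].
split; last by rewrite val_setT.
split=> [Y | [|[|[|[|i]]]] //= _]; rewrite ?big_cons ?big_nil.
- by rewrite !inE => /or4P[] /eqP ->; rewrite eqxx ?orbT.
- by apply/subsetPn; exists (lab 2); rewrite !inE !labE.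
- by apply/subsetPn; exists (lab 6); rewrite !inE !labE.
- by apply/subsetPn; exists (lab 3); rewrite !inE !labE.
Qed.

Theorem mainTheorem18 :
  is_matroid U27 /\
  minimal_X_matroid Xex U27 /\
  (forall I : {set {set E}}, minimal_X_matroid Xex I -> I = U27) /\
  valX_is Xex [set: E] 3 /\
  ~ (forall F : {set E}, valX_is Xex F (rank U27 F)).
Proof.
have U27_least I : X_matroid Xex I -> dep_le U27 I.
  by move=> X_I; apply/uniform_dep_le => A; apply: Xex_indep_card.
have [U27_minimal U27_unique] := least_X_matroid_unique_minimal U27_X_matroid U27_least.
split; first exact: uniform_is_matroid.
split; first exact: U27_minimal.
split; first exact: U27_unique.
split; first exact: valX_setT.
move=> valX_rank; have [[S [S_proper val_S]] _] := valX_rank [set: E].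
have := valX_setT.2 S S_proper; rewrite val_S.
by move/leq_trans/(_ (rank_uniform_le 2 _)).
Qed.
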